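(* Let $k,l\ge1$ with $k\ne l$ and $1\le r\le 4kl$. Let $\overline{\mathcal{B}}(2k,2l;r)$ be the subset of $\mathcal{B}(2k,2l;r)$ consisting of boards whose board partition $(\lambda_1,\lambda_2,\lambda_3,\lambda_4)$ satisfies: (i) $\lambda_1\ge\lambda_i$ for all $i>1$; (ii) if $\lambda_1=\lambda_2$ then $\lambda_3\ge\lambda_4$; (iii) if $\lambda_1=\lambda_3$ then $\lambda_2\ge\lambda_4$; (iv) if $\lambda_1=\lambda_4$ then $\lambda_2\ge\lambda_3$. Then: (1) $\overline{\mathcal{B}}(2k,2l;r)$ is a disjoint union of sets each consisting of all boards in $\mathcal{B}(2k,2l;r)$ with some fixed board partition; (2) every board of $\mathcal{B}(2k,2l;r)$ is equivalent under $\langle H,V\rangle$ to some board of $\overline{\mathcal{B}}(2k,2l;r)$; (3) if two boards of $\overline{\mathcal{B}}(2k,2l;r)$ are equivalent under $\langle H,V\rangle$, they have the same board partition.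
   Context: A $2k\times 2l$ grid ($2k$ rows numbered top to bottom, $2l$ columns numbered left to right) of unit cells; $\mathcal{B}(2k,2l;r)$ is the set of boards, i.e. subsets of exactly $r$ blocked cells. The symmetry group is $\langle H,V\rangle=\{R_0,H,V,R_{180}\}$, where $H$ is reflection across the horizontal midline, $V$ reflection across the vertical midline, $R_{180}$ rotation by 180 degrees; boards are equivalent if some element maps one to the other. The grid is divided into four $k\times l$ quadrants: $Q_1$ = rows $1..k$, cols $1..l$; $Q_2$ = rows $1..k$, cols $l+1..2l$; $Q_3$ = rows $k+1..2k$, cols $l+1..2l$; $Q_4$ = rows $k+1..2k$, cols $1..l$. The board partition is $(\lambda_1,\lambda_2,\lambda_3,\lambda_4)$ with $\lambda_i$ the number of blocked cells in $Q_i$. *)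

From mathcomp Require Import all_boot.
Set Implicit Arguments. Unset Strict Implicit. Unset Printing Implicit Defensive.

(* Cells of the 2k x 2l grid: (row, column), 0-indexed
   (row i here = row i+1 of the paper, rows numbered top to bottom). *)
Definition cell (k l : nat) := ('I_(2 * k) * 'I_(2 * l))%type.
Definition board (k l : nat) := {set cell k l}.

(* B(2k,2l;r): boards with exactly r blocked cells *)
Definition boards (k l r : nat) : {set board k l} := [set B : board k l | #|B| == r].

Inductive sym := R0 | Hsym | Vsym | R180.

Definition act_cell (k l : nat) (g : sym) (c : cell k l) : cell k l :=
  match g with
  | R0 => c
  | Hsym => (rev_ord c.1, c.2)
  | Vsym => (c.1, rev_ord c.2)
  | R180 => (rev_ord c.1, rev_ord c.2)
  end.

Definition act_board (k l : nat) (g : sym) (B : board k l) : board k l :=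
  [set act_cell g c | c in B].

Definition equivalent (k l : nat) (B B' : board k l) : Prop :=
  exists g : sym, act_board g B = B'.

Definition inQ1 (k l : nat) (c : cell k l) : bool := (c.1 < k) && (c.2 < l).
Definition inQ2 (k l : nat) (c : cell k l) : bool := (c.1 < k) && (l <= c.2).
Definition inQ3 (k l : nat) (c : cell k l) : bool := (k <= c.1) && (l <= c.2).
Definition inQ4 (k l : nat) (c : cell k l) : bool := (k <= c.1) && (c.2 < l).

Definition bpart (k l : nat) (B : board k l) : nat * nat * nat * nat :=
  (#|[set c in B | inQ1 c]|, #|[set c in B | inQ2 c]|,
   #|[set c in B | inQ3 c]|, #|[set c in B | inQ4 c]|).

Definition good_partition (p : nat * nat * nat * nat) : bool :=
  let: (l1, l2, l3, l4) := p in
  [&& (l2 <= l1), (l3 <= l1), (l4 <= l1),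
      (l1 == l2) ==> (l4 <= l3),
      (l1 == l3) ==> (l4 <= l2) &
      (l1 == l4) ==> (l3 <= l2)].

Definition Bbar (k l r : nat) : {set board k l} :=
  [set B in boards k l r | good_partition (bpart B)].

(* Each symmetry of the grid permutes the four quadrants, so it acts on board
   partitions by a permutation of coordinates, through the Klein four-group.
   The conditions (i)-(iv) say exactly that a partition is the
   lexicographically largest in its orbit; such an element exists in every
   orbit, and is the only good partition of its orbit. *)
From mathcomp Require Import all_boot.
From mathcomp Require Import zify.

Definition act_part {T : Type} (g : sym) (p : T * T * T * T) : T * T * T * T :=
  let: (a, b, c, d) := p in
  match g with
  | R0 => (a, b, c, d)
  | Hsym => (d, c, b, a)
  | Vsym => (b, a, d, c)
  | R180 => (c, d, a, b)
  end.

Lemma card_imset_involutive {T : finType} {f : T -> T} :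
  involutive f -> forall (A : {set T}) (P : pred T),
  #|[set x in f @: A | P x]| = #|[set x in A | P (f x)]|.
Proof.
move=> fK A P; have -> : [set x in f @: A | P x] = f @^-1: [set x in A | P (f x)].
  by apply/setP => x; rewrite (can_imset_pre _ fK) !inE fK.
by rewrite card_preimset //; apply: can_inj fK.
Qed.

Lemma rev_ord_ltn_half k (x : 'I_(2 * k)) : (rev_ord x < k) = (k <= x).
Proof. by have := ltn_ord x; rewrite /=; lia. Qed.

Lemma rev_ord_geq_half k (x : 'I_(2 * k)) : (k <= rev_ord x) = (x < k).
Proof. by rewrite leqNgt rev_ord_ltn_half -ltnNge. Qed.

Section BoardAction.
Variables k l : nat.
Implicit Types (g : sym) (B : board k l).

Lemma act_cellK g : involutive (@act_cell k l g).
Proof. by case: g => -[x y] //=; rewrite ?rev_ordK. Qed.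

Lemma card_act_board g B : #|act_board g B| = #|B|.
Proof. by rewrite card_imset //; apply: can_inj (act_cellK g). Qed.

Lemma act_board_boards r g B : (act_board g B \in boards k l r) = (B \in boards k l r).
Proof. by rewrite !inE card_act_board. Qed.

Lemma bpart_act_board g B : bpart (act_board g B) = act_part g (bpart B).
Proof.
rewrite /bpart !(card_imset_involutive (act_cellK g)).
case: g; congr (_, _, _, _); apply: eq_card => -[x y];
  by rewrite !inE /inQ1 /inQ2 /inQ3 /inQ4 /= ?rev_ord_ltn_half ?rev_ord_geq_half.
Qed.

End BoardAction.

Lemma exists_good_act_part (p : nat * nat * nat * nat) :
  exists g, good_partition (act_part g p).
Proof.
case: p => [[[a b] c] d].
have : [|| good_partition (a, b, c, d), good_partition (d, c, b, a),
           good_partition (b, a, d, c) | good_partition (c, d, a, b)].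
  by rewrite /good_partition; lia.
by case/or4P; [exists R0 | exists Hsym | exists Vsym | exists R180].
Qed.

Lemma good_act_part_eq g (p : nat * nat * nat * nat) :
  good_partition p -> good_partition (act_part g p) -> act_part g p = p.
Proof.
case: p => [[[a b] c] d]; rewrite /good_partition => good_p good_gp.
by apply/eqP; case: g good_gp => /=; rewrite ?eqxx // !xpair_eqE; lia.
Qed.

Theorem theorem4p5 (k l r : nat) :
  1 <= k -> 1 <= l -> k <> l -> 1 <= r -> r <= 4 * k * l ->
  (* (1) Bbar is the (disjoint) union of the full partition classes for a set P of partitions *)
  (exists P : pred (nat * nat * nat * nat),
      Bbar k l r = [set B in boards k l r | P (bpart B)]) /\
  (* (2) every board is equivalent to some board of Bbar *)
  (forall B : board k l, B \in boards k l r ->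
      exists2 B' : board k l, B' \in Bbar k l r & equivalent B B') /\
  (* (3) equivalent boards of Bbar have the same partition *)
  (forall B B' : board k l, B \in Bbar k l r -> B' \in Bbar k l r ->
      equivalent B B' -> bpart B = bpart B').
Proof.
move=> _ _ _ _ _; split; first by exists good_partition.
split.
- move=> B B_r; have [g good_g] := exists_good_act_part (bpart B).
  exists (act_board g B); last by exists g.
  by rewrite inE act_board_boards B_r bpart_act_board.
- move=> B B' /setIdP[_ good_B] /setIdP[_ good_B'] [g eq_B'].
  subst B'; rewrite bpart_act_board in good_B' *.
  by rewrite good_act_part_eq.
Qed.
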